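(* For integers $\alpha\geq k\geq 2$, we have $\alpha-1+(k-1)\left\lfloor\frac{\alpha-1}{k-1}\right\rfloor\leq \tau(k,\alpha)\leq 2\alpha-2$.
   Context: For integers $k,\alpha\geq1$, $\tau(k,\alpha)$ is the largest integer $n$ such that there exists a $k$-uniform hypergraph on $n$ vertices with independence number less than $\alpha$ and no loose path of length two, i.e., no two edges intersecting in exactly one vertex. (The independence number is the largest size of a vertex set containing no edge.) *)

From mathcomp Require Import all_boot.
Set Implicit Arguments. Unset Strict Implicit. Unset Printing Implicit Defensive.

Definition k_uniform (n k : nat) (E : {set {set 'I_n}}) : Prop :=
  forall e, e \in E -> #|e| = k.

Definition no_loose_path2 (n : nat) (E : {set {set 'I_n}}) : Prop :=
  forall e f, e \in E -> f \in E -> #|e :&: f| != 1.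

Definition independent (n : nat) (E : {set {set 'I_n}}) (A : {set 'I_n}) : bool :=
  [forall e in E, ~~ (e \subset A)].

Definition indep_number (n : nat) (E : {set {set 'I_n}}) : nat :=
  \max_(A : {set 'I_n} | independent E A) #|A|.

Definition tau_admissible (k alpha n : nat) : Prop :=
  exists E : {set {set 'I_n}},
    [/\ k_uniform k E, indep_number E < alpha & no_loose_path2 E].

Definition is_tau (k alpha T : nat) : Prop :=
  tau_admissible k alpha T /\ (forall n, tau_admissible k alpha n -> n <= T).

(** For the upper bound, every hypergraph with edges of size at least two and
    no loose path of length two has property B: in a 2-colouring with the
    fewest monochromatic edges, recolouring one vertex [v] of a monochromatic
    edge [e] would create a monochromatic edge [f] through [v] only if
    [f :&: e = [set v]].  Both colour classes are then independent, so
    [n <= 2 * (alpha - 1)].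

    For the lower bound, cut [alpha - 1 + (k - 1) q] vertices, with
    [q = (alpha - 1) %/ (k - 1)], into [q] blocks of size [2k - 2] and a
    remainder of size less than [k - 1], and take all [k]-sets inside a block.
    Two such edges meet in at least two vertices or not at all, and an
    independent set has fewer than [k] vertices in each block. *)

From mathcomp Require Import all_boot zify.
From mathcomp Require boolp.

Set Implicit Arguments.
Unset Strict Implicit.
Unset Printing Implicit Defensive.

Lemma exists_subset_card (T : finType) (A : {set T}) k :
  k <= #|A| -> exists2 e : {set T}, e \subset A & #|e| = k.
Proof.
case/card_geqP=> s [s_uniq s_size sA]; exists [set x in s].
  by apply/subsetP=> x; rewrite inE => /sA.
by rewrite cardsE (card_uniqP s_uniq).
Qed.

Lemma card_sum_fibers (T I : finType) (f : T -> I) (A : {set T}) :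
  #|A| = \sum_(j : I) #|[set x in A | f x == j]|.
Proof.
rewrite -sum1_card (partition_big f predT) //=; apply: eq_bigr => j _.
by rewrite -sum1_card; apply: eq_bigl => x; rewrite inE.
Qed.

Lemma card_ord_interval n (B : {set 'I_n}) a b :
  (forall i : 'I_n, i \in B -> a <= i < b) -> #|B| <= b - a.
Proof.
move=> Bab; rewrite cardE -(size_map val) -(size_iota a (b - a)).
apply: uniq_leq_size; first by rewrite map_inj_uniq ?enum_uniq //; apply: val_inj.
move=> y /mapP [i]; rewrite mem_enum => /Bab i_ab ->; rewrite mem_iota /=; lia.
Qed.

Lemma card_divn_fiber n m j : 0 < m ->
  #|[set x : 'I_n | x %/ m == j]| <= minn m (n - j * m).
Proof.
move=> m_gt0; have -> : minn m (n - j * m) = minn (j * m + m) n - j * m by lia.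
apply: card_ord_interval => x; rewrite inE => /eqP x_j.
have := ltn_ord x; have := divn_eq x m; have := ltn_pmod x m_gt0; rewrite x_j; lia.
Qed.

Lemma bounded_nat_has_max (P : nat -> Prop) a b :
  P a -> (forall n, P n -> n <= b) ->
  exists T, P T /\ forall n, P n -> n <= T.
Proof.
move=> Pa P_le_b.
have [T /boolp.asboolP PT T_max] :=
  ex_maxnP (ex_intro (fun n => boolp.asbool (P n)) a (boolp.asboolT Pa))
           (fun n Pn => P_le_b n (boolp.asboolW Pn)).
by exists T; split=> // n /boolp.asboolT /T_max.
Qed.

Lemma card_le_indep_number n (E : {set {set 'I_n}}) A :
  independent E A -> #|A| <= indep_number E.
Proof. exact: leq_bigmax_cond. Qed.

Section TwoColouring.

Variables (n : nat) (E : {set {set 'I_n}}).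
Hypothesis E_gt1 : forall e, e \in E -> 1 < #|e|.
Hypothesis E_loose : no_loose_path2 E.

Definition monochromatic_edges (S : {set 'I_n}) : {set {set 'I_n}} :=
  [set e in E | (e \subset S) || (e \subset ~: S)].

Lemma monochromatic_edgesC S : monochromatic_edges (~: S) = monochromatic_edges S.
Proof. by apply/setP=> e; rewrite !inE setCK orbC. Qed.

Lemma monochromatic_edges_recolour (S e : {set 'I_n}) v :
  e \in E -> e \subset S -> v \in e ->
  monochromatic_edges (S :\ v) \proper monochromatic_edges S.
Proof.
move=> eE eS ve; apply/properP; split.
  apply/subsetP=> f; rewrite !inE => /andP [fE f_mono]; rewrite fE.
  case/orP: f_mono => [/subset_trans-> //|]; first exact: subsetDl.
  rewrite setCD => f_sub.
  case vf: (v \in f).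
    have fe_v : f :&: e = [set v].
      apply/setP=> x; rewrite !inE; apply/andP/eqP => [[xf xe]|->//].
      move: (subsetP f_sub x xf) (subsetP eS x xe).
      by rewrite !inE => /orP [/negPf->|/eqP].
    by have := E_loose fE eE; rewrite fe_v cards1.
  apply/orP; right; apply/subsetP=> x xf; move: (subsetP f_sub x xf).
  by rewrite !inE => /orP [//|/eqP x_v]; rewrite -x_v xf in vf.
exists e; first by rewrite inE eE eS.
rewrite !inE eE /= negb_or; apply/andP; split.
  by apply/subsetP=> /(_ v ve); rewrite !inE eqxx.
rewrite setCD; apply/negP=> e_sub; have : e \subset [set v].
  apply/subsetP=> x xe; move: (subsetP e_sub x xe) (subsetP eS x xe).
  by rewrite !inE => /orP [/negPf->|].
by move/subset_leq_card; rewrite cards1 leqNgt E_gt1.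
Qed.

Lemma exists_two_colouring :
  exists S, independent E S /\ independent E (~: S).
Proof.
case: (arg_minnP (fun S => #|monochromatic_edges S|) (isT : predT set0)).
move=> S _ S_min; exists S.
suff /eqP mono0 : monochromatic_edges S == set0.
  split; apply/forall_inP=> e eE; apply/negP=> e_sub;
    by have := in_set0 e; rewrite -mono0 inE eE e_sub ?orbT.
apply/negPn/negP=> /set0Pn [e]; rewrite inE => /andP [eE /orP e_mono].
have [v ve] : exists v, v \in e by apply/set0Pn; rewrite -card_gt0 ltnW ?E_gt1.
have [S' better] : exists S', monochromatic_edges S' \proper monochromatic_edges S.
  case: e_mono => [eS|eSc].
    by exists (S :\ v); apply: monochromatic_edges_recolour eE eS ve.
  exists (~: S :\ v).
  by rewrite -(monochromatic_edgesC S) (monochromatic_edges_recolour eE eSc ve).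
by have := S_min S' isT; rewrite leqNgt proper_card.
Qed.

End TwoColouring.

Lemma tau_admissible_upper k alpha n :
  1 < k -> tau_admissible k alpha n -> n <= 2 * alpha - 2.
Proof.
move=> k_gt1 [E [E_unif E_indep E_loose]].
have [S [S_indep Sc_indep]] : exists S, independent E S /\ independent E (~: S).
  by apply: exists_two_colouring => // e /E_unif->.
have := card_le_indep_number S_indep; have := card_le_indep_number Sc_indep.
have := cardsC S; rewrite card_ord; lia.
Qed.

Section BlockCliques.

Variables (n k : nat) (I : finType) (block : 'I_n -> I).

Definition block_cliques : {set {set 'I_n}} :=
  [set e : {set 'I_n} | (#|e| == k) && [exists j, e \subset [set x | block x == j]]].

Lemma block_cliques_uniform : k_uniform k block_cliques.
Proof. by move=> e; rewrite inE => /andP [/eqP]. Qed.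

Lemma block_cliques_no_loose_path2 :
  (forall j, #|[set x | block x == j]| <= 2 * k - 2) -> no_loose_path2 block_cliques.
Proof.
move=> block_small e f; rewrite !inE.
case/andP=> /eqP e_k /existsP [j e_j] /andP [/eqP f_k /existsP [j' f_j']].
have [j_j'|j_neq] := eqVneq j j'.
  have ef_j : e :|: f \subset [set x | block x == j] by rewrite subUset e_j j_j'.
  have ef_small : #|e :|: f| <= 2 * k - 2 :=
    leq_trans (subset_leq_card ef_j) (block_small j).
  by have := cardsUI e f; rewrite e_k f_k; lia.
suff -> : e :&: f = set0 by rewrite cards0.
apply/setP=> x; rewrite !inE; apply/andP=> [[xe xf]].
move: (subsetP e_j x xe) (subsetP f_j' x xf); rewrite !inE => /eqP-> /eqP j_j'.
by rewrite j_j' eqxx in j_neq.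
Qed.

Lemma card_independent_block_cliques A :
  independent block_cliques A ->
  #|A| <= \sum_j minn (k - 1) #|[set x | block x == j]|.
Proof.
move=> A_indep; rewrite (card_sum_fibers block) leq_sum // => j _.
rewrite leq_min; apply/andP; split; last first.
  by apply: subset_leq_card; apply/subsetP=> x; rewrite !inE => /andP [].
set F := [set x in A | block x == j]; set c := #|F|; suff : c < k by lia.
rewrite /c ltnNge; apply/negP=> /exists_subset_card [e e_F e_k].
have e_clique : e \in block_cliques.
  rewrite inE e_k eqxx; apply/existsP; exists j; apply: (subset_trans e_F).
  by apply/subsetP=> x; rewrite !inE => /andP [].
have /negP := forall_inP A_indep e e_clique; apply; apply: (subset_trans e_F).
by apply/subsetP=> x; rewrite !inE => /andP [].
Qed.

End BlockCliques.

Definition divn_block n q m (x : 'I_n) : 'I_q.+1 := inord (x %/ m).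

Lemma card_divn_block_fiber n q m (j : 'I_q.+1) : 0 < m -> n <= q.+1 * m ->
  #|[set x : 'I_n | divn_block q m x == j]| <= minn m (n - j * m).
Proof.
move=> m_gt0 n_le; apply: leq_trans (@card_divn_fiber n m j m_gt0).
apply: subset_leq_card.
apply/subsetP=> x; rewrite !inE /divn_block => /eqP <-; rewrite inordK //.
by rewrite ltn_divLR //; apply: leq_trans (ltn_ord x) n_le.
Qed.

Lemma tau_admissible_lower k alpha : 1 < k -> 0 < alpha ->
  tau_admissible k alpha (alpha - 1 + (k - 1) * ((alpha - 1) %/ (k - 1))).
Proof.
move=> k_gt1 alpha_gt0; set q := (alpha - 1) %/ (k - 1).
have q_le : q * (k - 1) <= alpha - 1 := leq_divM _ _.
have alpha_lt : alpha - 1 < q.+1 * (k - 1) by apply: ltn_ceil; lia.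
have m_gt0 : 0 < 2 * k - 2 by lia.
have n_le : alpha - 1 + (k - 1) * q <= q.+1 * (2 * k - 2) by nia.
have fiber_small := card_divn_block_fiber _ m_gt0 n_le.
exists (block_cliques k (divn_block q (2 * k - 2))); split.
- exact: block_cliques_uniform.
- apply: (@leq_ltn_trans (alpha - 1)); last by lia.
  apply/bigmax_leqP=> A /card_independent_block_cliques /leq_trans; apply.
  rewrite big_ord_recr /=.
  apply: (@leq_trans (q * (k - 1) + (alpha - 1 + (k - 1) * q - q * (2 * k - 2))));
    last by nia.
  apply: leq_add.
    rewrite [q * _]mulnC -iter_addn_0 -big_const_ord.
    by apply: leq_sum => i _; exact: geq_minl.
  exact: leq_trans (geq_minr _ _) (leq_trans (fiber_small _) (geq_minr _ _)).
- apply: block_cliques_no_loose_path2 => j.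
  exact: leq_trans (fiber_small j) (geq_minl _ _).
Qed.

Theorem proposition1p6 (k alpha : nat) :
  2 <= k -> k <= alpha ->
  exists T, is_tau k alpha T /\
    alpha - 1 + (k - 1) * ((alpha - 1) %/ (k - 1)) <= T /\ T <= 2 * alpha - 2.
Proof.
move=> k_gt1 k_le_alpha.
have lower := tau_admissible_lower k_gt1 (leq_trans (ltnW k_gt1) k_le_alpha).
have upper n : tau_admissible k alpha n -> n <= 2 * alpha - 2.
  exact: tau_admissible_upper.
have [T [admissible_T T_max]] := bounded_nat_has_max lower upper.
by exists T; split; [split | split; [exact: T_max | exact: upper]].
Qed.
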